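(* Let $G$ be a random graph on the node set $\mathbb{N}$ whose distribution $P$ is exchangeable, and let $\phi:\mathcal{U}\to\mathbb{R}$ be the function determined by its Möbius parameter via $\phi([F]) = Z(F) = P(F\subseteq G)$ for every finite labeled graph $F$ with node set contained in $\mathbb{N}$. Then $\phi$ is bounded and positive definite on the semigroup $(\mathcal{U},+)$ and $\phi(\emptyset)=1$; that is, $\phi\in\mathcal{P}^b_1(\mathcal{U})$.
   Context: All graphs are simple. For $n\in\mathbb{N}$, $\mathcal{L}_n$ is the set of labeled simple graphs with node set $[n]=\{1,\dots,n\}$, and $\mathcal{L}_\infty$ is the set of simple graphs with node set $\mathbb{N}$; a random graph is a random element of $\mathcal{L}_\infty$ (with the $\sigma$-algebra generated by the edge indicators). For $G\in\mathcal{L}_\infty$ and $n\in\mathbb{N}$, $G[n]\in\mathcal{L}_n$ is the subgraph induced by $[n]$. For $H\in\mathcal{L}_n$ and a permutation $\sigma$ of $[n]$, $H_\sigma$ is the relabeled graph with $i\sim j$ in $H$ iff $\sigma(i)\sim\sigma(j)$ in $H_\sigma$. The distribution $P$ is exchangeable if $P(G[n]=H)=P(G[n]=H_\sigma)$ for all $n$, all $H\in\mathcal{L}_n$ and all permutations $\sigma$ of $[n]$. For a finite labeled graph $F$ with node set in $\mathbb{N}$, $F\subseteq G$ means every edge of $F$ is an edge of $G$; the function $Z(F)=P(F\subseteq G)$ is the Möbius parameter of $P$. $\mathcal{U}$ denotes the set of unlabeled finite simple graphs (isomorphism classes $[F]$ of finite labeled graphs $F$), including the empty graph $\emptyset$;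 under exchangeability $Z(F)$ depends only on $[F]$, which defines $\phi$. $(\mathcal{U},+)$ is the Abelian semigroup where $U+V$ is the node-disjoint union, with neutral element $\emptyset$. A function $\phi:\mathcal{U}\to\mathbb{R}$ is positive definite if $\sum_{j,k=1}^n c_jc_k\phi(s_j+s_k)\ge 0$ for all $n\in\mathbb{N}$, $c_j\in\mathbb{R}$, $s_j\in\mathcal{U}$. $\mathcal{P}^b_1(\mathcal{U})$ is the set of bounded positive definite functions $\phi$ on $\mathcal{U}$ with $\phi(\emptyset)=1$. *)

From HB Require Import structures.
From mathcomp Require Import all_boot all_order all_algebra all_fingroup.
From mathcomp Require Import all_classical all_reals all_analysis.
Set Implicit Arguments. Unset Strict Implicit. Unset Printing Implicit Defensive.
Import Order.TTheory GRing.Theory Num.Theory.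

(* Node i of the paper ({1,2,...}) is node (i-1) : nat here; [n] = 'I_n. *)

Definition simple_rel (V : finType) (e : rel V) : Prop :=
  symmetric e /\ irreflexive e.

(* Relabeling H_sigma: i ~ j in H iff sigma i ~ sigma j in H_sigma. *)
Definition relabel (n : nat) (H : rel 'I_n) (s : {perm 'I_n}) : rel 'I_n :=
  fun x y => H ((s^-1)%g x) ((s^-1)%g y).

(* Finite graphs, representatives of elements of U: a node count n and
   an adjacency relation on 'I_n (simplicity imposed separately). *)
Definition fingraph_t := {n : nat & rel 'I_n}.

Definition fg_simple (F : fingraph_t) : Prop := simple_rel (projT2 F).

Definition fg_empty : fingraph_t := existT (fun n => rel 'I_n) 0%N (fun _ _ => false).

Definition dunion (F1 F2 : fingraph_t) : fingraph_t :=
  existT (fun n => rel 'I_n) (projT1 F1 + projT1 F2)%N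
    (fun x y => match fintype.split x, fintype.split y with
                | inl i, inl j => projT2 F1 i j
                | inr i, inr j => projT2 F2 i j
                | _, _ => false
                end).

Section RandomGraph.
Context (d : measure_display) (T : measurableType d) (R : realType).
Local Open Scope classical_set_scope.

Definition random_graph (G : T -> nat -> nat -> bool) : Prop :=
  (forall i j : nat, measurable [set w | G w i j]) /\
  (forall w, symmetric (G w) /\ irreflexive (G w)).

Definition induced_eq (G : T -> nat -> nat -> bool) (n : nat) (H : rel 'I_n)
  : set T := [set w | forall i j : 'I_n, G w i j = H i j].

Definition exchangeable (P : probability T R) (G : T -> nat -> nat -> bool)
  : Prop :=
  forall (n : nat) (H : rel 'I_n) (s : {perm 'I_n}), simple_rel H ->
    P (induced_eq G H) = P (induced_eq G (relabel H s)).

Definition sub_event (G : T -> nat -> nat -> bool) (n : nat) (F : rel 'I_n)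
  (f : 'I_n -> nat) : set T :=
  [set w | forall i j : 'I_n, F i j -> G w (f i) (f j)].

End RandomGraph.

Definition positive_definite (R : realType) (phi : fingraph_t -> R) : Prop :=
  forall (m : nat) (c : 'I_m -> R) (s : 'I_m -> fingraph_t),
    (forall j, fg_simple (s j)) ->
    (0 <= \sum_(j < m) \sum_(k < m) c j * c k * phi (dunion (s j) (s k)))%R.

Definition bounded_fg (R : realType) (phi : fingraph_t -> R) : Prop :=
  exists M : R, forall F, fg_simple F -> (`|phi F| <= M)%R.

From HB Require Import structures.
From mathcomp Require Import all_boot all_order all_algebra all_fingroup.
From mathcomp Require Import all_classical all_reals all_analysis.
Import Order.TTheory GRing.Theory Num.Theory.
Local Open Scope classical_set_scope.
Local Open Scope ring_scope.
Set Implicit Arguments. Unset Strict Implicit.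

(* Place N copies of the graphs s_j on pairwise disjoint sets of nodes, copy
   i using the nodes congruent to i mod N, and let E_(i,j) be the event that
   copy i of s_j is contained in G.  The matrix P(E_a ∩ E_b) is positive
   semidefinite, being the second moment matrix of the indicators of the E_a.
   For distinct copies i <> i', the event E_(i,j) ∩ E_(i',l) is an embedding
   of s_j + s_l into G, so its probability is phi(s_j + s_l); the N diagonal
   blocks contribute at most C = (Σ_j |c_j|)^2.  Hence the quadratic form Q of
   phi satisfies 0 <= N (C + (N - 1) Q) for every N, which forces Q >= 0. *)

Lemma pair_bigE (V : nmodType) (I J : finType) (F : I * J -> V) :
  \sum_(p : I * J) F p = \sum_i \sum_j F (i, j).
Proof. by rewrite pair_bigA; apply: eq_bigr => -[]. Qed.

Lemma ge0_of_ge0_affine (R : archiRealFieldType) (C Q : R) :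
  (forall k : nat, 0 <= C + k%:R * Q) -> 0 <= Q.
Proof.
move=> affine_ge0; rewrite leNgt; apply/negP => Q_lt0.
have oppQ_gt0 : 0 < - Q by rewrite oppr_gt0.
pose k := (Num.truncn (C / - Q)).+1.
have : C < k%:R * - Q by rewrite -ltr_pdivrMr // truncnS_gt.
by rewrite mulrN -subr_lt0 opprK ltNge affine_ge0.
Qed.

Section FiniteMeasureGram.
Context (d : measure_display) (T : measurableType d) (R : realType).
Variable mu : {finite_measure set T -> \bar R}.

Lemma gram_measureI_ge0 (I : finType) (E : I -> set T) (c : I -> R) :
  (forall a, measurable (E a)) ->
  0 <= \sum_a \sum_b c a * c b * fine (mu (E a `&` E b)).
Proof.
move=> mE; have mT := @measurableT _ T.
have mEI a b : measurable (E a `&` E b) by exact: measurableI.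
pose f a b w := ((c a * c b)%:E * (\1_(E a `&` E b) w)%:E)%E.
have int_f a b : mu.-integrable [set: T] (f a b).
  by apply: (integrableZl mT); exact: integrable_indic.
have square_sum w :
    ((\sum_a c a * \1_(E a) w) ^+ 2)%:E = (\sum_a \sum_b f a b w)%E.
  rewrite expr2 mulr_suml -sumEFin; apply: eq_bigr => a _.
  rewrite mulr_sumr -sumEFin; apply: eq_bigr => b _.
  by rewrite /f indicI -EFinM /= mulrACA.
have integral_f a b : (\int[mu]_(w in [set: T]) f a b w
    = (c a * c b * fine (mu (E a `&` E b)))%:E)%E.
  rewrite /f integralZl //; last exact: integrable_indic.
  rewrite integral_indic // setIT [in RHS]EFinM fineK //.
  exact: fin_num_measure.
rewrite -lee_fin -sumEFin.
under eq_bigr => a _ do rewrite -sumEFin.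
under eq_bigr => a _ do under eq_bigr => b _ do rewrite -integral_f.
under eq_bigr => a _ do rewrite -integral_sum //.
rewrite -integral_sum //; last by move=> a; exact: integrable_sum.
under eq_integral => w _ do rewrite -square_sum.
by apply: integral_ge0 => w _; rewrite lee_fin sqr_ge0.
Qed.

End FiniteMeasureGram.

Lemma dunion_simple (F1 F2 : fingraph_t) :
  fg_simple F1 -> fg_simple F2 -> fg_simple (dunion F1 F2).
Proof.
case: F1 F2 => [n1 r1] [n2 r2] [r1_sym r1_irr] [r2_sym r2_irr]; split => /=.
  by move=> x y; case: (fintype.split x) => a; case: (fintype.split y) => b.
by move=> x; case: (fintype.split x) => a.
Qed.

Definition split_case (n1 n2 : nat) (f1 : 'I_n1 -> nat) (f2 : 'I_n2 -> nat)
    (x : 'I_(n1 + n2)) : nat :=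
  match fintype.split x with inl a => f1 a | inr b => f2 b end.

Lemma split_case_inj (n1 n2 : nat) (f1 : 'I_n1 -> nat) (f2 : 'I_n2 -> nat) :
  injective f1 -> injective f2 -> (forall a b, f1 a <> f2 b) ->
  injective (split_case f1 f2).
Proof.
move=> f1_inj f2_inj f12_disj x y; rewrite /split_case -[x]splitK -[y]splitK.
case: (fintype.split x) => a; case: (fintype.split y) => b; rewrite !unsplitK.
- by move/f1_inj ->.
- by move/f12_disj.
- by move/esym/f12_disj.
- by move/f2_inj ->.
Qed.

Section SubEvent.
Context (d : measure_display) (T : measurableType d).
Variable G : T -> nat -> nat -> bool.

Lemma sub_event_dunion (F1 F2 : fingraph_t)
    (f1 : 'I_(projT1 F1) -> nat) (f2 : 'I_(projT1 F2) -> nat) :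
  sub_event G (projT2 (dunion F1 F2)) (split_case f1 f2) =
  sub_event G (projT2 F1) f1 `&` sub_event G (projT2 F2) f2.
Proof.
case: F1 F2 f1 f2 => [n1 r1] [n2 r2] f1 f2; apply/seteqP; split => w /=.
  move=> sub; split => i j rij.
    have := sub (lshift n2 i) (lshift n2 j).
    by rewrite /split_case !(unsplitK (inl _)); apply.
  have := sub (rshift n1 i) (rshift n1 j).
  by rewrite /split_case !(unsplitK (inr _)); apply.
move=> [sub1 sub2] x y; rewrite /split_case.
case: (fintype.split x) => a; case: (fintype.split y) => b //.
  exact: sub1.
exact: sub2.
Qed.

Lemma measurable_sub_event (n : nat) (F : rel 'I_n) (f : 'I_n -> nat) :
  (forall i j, measurable [set w | G w i j]) -> measurable (sub_event G F f).
Proof.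
move=> G_meas; have -> : sub_event G F f =
    \bigcap_(q in [set q | F q.1 q.2]) [set w | G w (f q.1) (f q.2)].
  apply/seteqP; split => w /= sub => [[i j] /= Fij | i j Fij].
    exact: sub.
  exact: (sub (i, j)).
by apply: fin_bigcap_measurable; [exact: finite_finset | move=> q _].
Qed.

End SubEvent.

Definition copy_place (N i : nat) {n : nat} (x : 'I_n) : nat := (x * N + i)%N.

Lemma copy_place_inj (N i n : nat) :
  (i < N)%N -> injective (@copy_place N i n).
Proof.
move=> i_lt x y /eqP; rewrite eqn_add2r eqn_pmul2r ?(leq_ltn_trans _ i_lt) //.
by move/eqP/val_inj.
Qed.

Lemma copy_place_disjoint (N i i' n n' : nat) :
  (i < N)%N -> (i' < N)%N -> i != i' ->
  forall (a : 'I_n) (b : 'I_n'), copy_place N i a <> copy_place N i' b.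
Proof.
move=> i_lt i'_lt neq_ii' a b /(congr1 (modn^~ N)).
by rewrite !modnMDl !modn_small // => /eqP; apply/negP.
Qed.

Lemma fine_probability_ge0_le1 (d : measure_display) (T : measurableType d)
    (R : realType) (P : probability T R) (A : set T) :
  measurable A -> 0 <= fine (P A) <= 1.
Proof.
move=> mA; have PA_fin : P A \is a fin_num by exact: fin_num_measure.
by rewrite -!lee_fin fineK // measure_ge0 probability_le1.
Qed.

Section MobiusParameter.
Context (d : measure_display) (T : measurableType d) (R : realType).
Variables (P : probability T R) (G : T -> nat -> nat -> bool).
Variable phi : fingraph_t -> R.
Hypothesis G_meas : forall i j, measurable [set w | G w i j].
Hypothesis phiE : forall (F : fingraph_t) (f : 'I_(projT1 F) -> nat),
  fg_simple F -> injective f -> (phi F)%:E = P (sub_event G (projT2 F) f).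

Lemma phi_fine (F : fingraph_t) (f : 'I_(projT1 F) -> nat) :
  fg_simple F -> injective f -> phi F = fine (P (sub_event G (projT2 F) f)).
Proof. by move=> F_simple f_inj; rewrite -phiE. Qed.

Lemma phi_ge0_le1 (F : fingraph_t) : fg_simple F -> 0 <= phi F <= 1.
Proof.
move=> F_simple; rewrite (@phi_fine F (@nat_of_ord _)) //; last exact: ord_inj.
exact/fine_probability_ge0_le1/measurable_sub_event.
Qed.

Lemma phi_empty : phi fg_empty = 1.
Proof.
have empty_simple : fg_simple fg_empty by [].
rewrite (@phi_fine _ (@nat_of_ord _)) //; last exact: ord_inj.
rewrite (_ : sub_event _ _ _ = setT) ?probability_setT //.
by apply/seteqP; split => w // _ [].
Qed.

Section QuadraticForm.
Variables (m : nat) (c : 'I_m -> R) (s : 'I_m -> fingraph_t).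
Hypothesis s_simple : forall j, fg_simple (s j).

Let quad := \sum_(j < m) \sum_(l < m) c j * c l * phi (dunion (s j) (s l)).
Let abs_mass := \sum_(j < m) \sum_(l < m) `|c j| * `|c l|.

Let copy_event (N : nat) (a : 'I_N * 'I_m) : set T :=
  sub_event G (projT2 (s a.2)) (copy_place N a.1).

Let measurable_copy_event N (a : 'I_N * 'I_m) : measurable (copy_event a).
Proof. exact: measurable_sub_event. Qed.

Lemma copy_eventI_distinct N (a b : 'I_N * 'I_m) : a.1 != b.1 ->
  fine (P (copy_event a `&` copy_event b)) = phi (dunion (s a.2) (s b.2)).
Proof.
move=> neq_ab; rewrite /copy_event -sub_event_dunion -phi_fine //.
  exact: dunion_simple.
apply: split_case_inj; [exact: copy_place_inj | exact: copy_place_inj |].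
exact: copy_place_disjoint.
Qed.

Lemma copy_gram_row_le k (i : 'I_k.+1) :
  \sum_(j < m) \sum_(b : 'I_k.+1 * 'I_m)
      c j * c b.2 * fine (P (copy_event (i, j) `&` copy_event b))
    <= abs_mass + quad *+ k.
Proof.
under eq_bigr => j _ do rewrite pair_bigE.
rewrite exchange_big (bigD1 i) //=; apply: lerD.
  apply: ler_sum => j _; apply: ler_sum => l _.
  have mEI := measurableI _ _ (measurable_copy_event (i, j))
    (measurable_copy_event (i, l)).
  have /andP[P_ge0 P_le1] := fine_probability_ge0_le1 P mEI.
  apply: le_trans (ler_norm _) _; rewrite !normrM (ger0_norm P_ge0).
  exact: ler_piMr.
rewrite (eq_bigr (fun _ => quad)) ?sumr_const ?cardC1 ?card_ord //.
move=> i' neq_i'i; apply: eq_bigr => j _; apply: eq_bigr => l _.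
by rewrite copy_eventI_distinct // eq_sym.
Qed.

Lemma copy_gram_le k :
  \sum_(a : 'I_k.+1 * 'I_m) \sum_(b : 'I_k.+1 * 'I_m)
      c a.2 * c b.2 * fine (P (copy_event a `&` copy_event b))
    <= k.+1%:R * (abs_mass + k%:R * quad).
Proof.
rewrite pair_bigE.
apply: le_trans (ler_sum _ (fun i _ => copy_gram_row_le i)) _.
by rewrite sumr_const card_ord !mulr_natl.
Qed.

Lemma quadratic_form_ge0 : 0 <= quad.
Proof.
apply: (@ge0_of_ge0_affine _ abs_mass) => k.
have gram_ge0 := gram_measureI_ge0 P (fun a => c a.2)
  (@measurable_copy_event k.+1).
have := le_trans gram_ge0 (copy_gram_le k).
by rewrite pmulr_rge0 // ltr0Sn.
Qed.

End QuadraticForm.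

Lemma phi_positive_definite : positive_definite phi.
Proof. by move=> m c s s_simple; exact: quadratic_form_ge0. Qed.

End MobiusParameter.

Theorem lemma1 (d : measure_display) (T : measurableType d) (R : realType)
  (P : probability T R) (G : T -> nat -> nat -> bool)
  (phi : fingraph_t -> R) :
  random_graph G ->
  exchangeable P G ->
  (forall (F : fingraph_t) (f : 'I_(projT1 F) -> nat), fg_simple F -> injective f ->
     ((phi F)%:E = P (sub_event G (projT2 F) f))%E) ->
  bounded_fg phi /\ positive_definite phi /\ phi fg_empty = 1%R.
Proof.
move=> [G_meas _] _ phiE; split; last split.
- exists 1 => F F_simple.
  have /andP[phi_ge0 phi_le1] := phi_ge0_le1 G_meas phiE F_simple.
  by rewrite ger0_norm.
- exact: phi_positive_definite G_meas phiE.
- exact: phi_empty phiE.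
Qed.
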